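(* Assume $\mathsf{X}=\mathsf{Y}$ is finite and $D\ge0$ with $\mathcal{G}(D)\neq\emptyset$. Let $P^*_{X,Y}\in\mathcal{G}(D)$ attain $I(\mu\|\psi,D)=\min\{I(X;Y):P_{X,Y}\in\mathcal{G}(D)\}$, and let $H^*(Y|X)$ be the conditional entropy under $P^*_{X,Y}$. Then for every $R_c\ge H^*(Y|X)$, $$\min\{R:(R,R_c)\in\mathcal{L}(D)\}=I(\mu\|\psi,D),$$ and $\{R:(R,R_c)\in\mathcal{L}(D)\}=\{R: R\ge I(\mu\|\psi,D)\}$, which is also the set of $R$ for which $(R,R_c')\in\mathcal{L}(D)$ for some $R_c'$ arbitrarily large.
   Context: $\mathsf{X}=\mathsf{Y}$ finite, $\rho$ a distortion measure, $\mu,\psi$ distributions on $\mathsf{X}$. $\mathcal{G}(D):=\{P_{X,Y}: P_X=\mu,\ P_Y=\psi,\ \mathbb{E}[\rho(X,Y)]\le D\}$. $\mathcal{M}(D):=\{P_{X,Y,U}: P_X=\mu,\ P_Y=\psi,\ \mathbb{E}[\rho(X,Y)]\le D,\ X-U-Y\text{ Markov},\ |\mathsf{U}|\le|\mathsf{X}|+|\mathsf{Y}|+1\}$, and $\mathcal{L}(D):=\{(R,R_c)\in\mathbb{R}^2:\exists P_{X,Y,U}\in\mathcal{M}(D)\text{ with } R\ge I(X;U),\ R+R_c\ge I(Y;U)\}$. *)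

From mathcomp Require Import all_boot.
From Stdlib Require Import Reals.
Set Implicit Arguments. Unset Strict Implicit. Unset Printing Implicit Defensive.

Local Open Scope R_scope.

Definition rsum (A : finType) (f : A -> R) : R := \big[Rplus/0]_(a : A) f a.

Definition is_pmf (A : finType) (p : A -> R) : Prop :=
  (forall a, 0 <= p a) /\ rsum p = 1.

Definition plogq (p q : R) : R :=
  if Rlt_dec 0 p then p * ln (p / q) else 0.

Definition marg1 (A B : finType) (P : A -> B -> R) (a : A) : R := rsum (fun b => P a b).
Definition marg2 (A B : finType) (P : A -> B -> R) (b : B) : R := rsum (fun a => P a b).

Definition mutinfo (A B : finType) (P : A -> B -> R) : R :=
  rsum (fun a => rsum (fun b => plogq (P a b) (marg1 P a * marg2 P b))).

Definition condent (A B : finType) (P : A -> B -> R) : R :=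
  - rsum (fun a => rsum (fun b => plogq (P a b) (marg1 P a))).

Definition expdist (T : finType) (rho : T -> T -> R) (P : T -> T -> R) : R :=
  rsum (fun x => rsum (fun y => P x y * rho x y)).

Definition inG (T : finType) (rho : T -> T -> R) (mu psi : T -> R) (D : R)
  (P : T -> T -> R) : Prop :=
  is_pmf (fun xy : T * T => P xy.1 xy.2) /\
  (forall x, marg1 P x = mu x) /\ (forall y, marg2 P y = psi y) /\
  expdist rho P <= D.

Definition mXU (T U : finType) (Q : T -> U -> T -> R) (x : T) (u : U) : R :=
  rsum (fun y => Q x u y).
Definition mUY (T U : finType) (Q : T -> U -> T -> R) (u : U) (y : T) : R :=
  rsum (fun x => Q x u y).
Definition mXY (T U : finType) (Q : T -> U -> T -> R) (x : T) (y : T) : R :=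
  rsum (fun u => Q x u y).
Definition mU (T U : finType) (Q : T -> U -> T -> R) (u : U) : R :=
  rsum (fun x => rsum (fun y => Q x u y)).

Definition markov (T U : finType) (Q : T -> U -> T -> R) : Prop :=
  forall x u y, Q x u y * mU Q u = mXU Q x u * mUY Q u y.

(* M(D), with U = 'I_k and k = |U| <= |X| + |Y| + 1 *)
Definition inM (T : finType) (rho : T -> T -> R) (mu psi : T -> R) (D : R)
  (k : nat) (Q : T -> 'I_k -> T -> R) : Prop :=
  is_true (leq k (addn (addn #|T| #|T|) 1)) /\
  is_pmf (fun t : T * 'I_k * T => Q t.1.1 t.1.2 t.2) /\
  inG rho mu psi D (mXY Q) /\
  markov Q.

Definition inL (T : finType) (rho : T -> T -> R) (mu psi : T -> R) (D : R)
  (R0 Rc : R) : Prop :=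
  exists (k : nat) (Q : T -> 'I_k -> T -> R),
    inM rho mu psi D Q /\
    mutinfo (mXU Q) <= R0 /\
    mutinfo (fun (y : T) (u : 'I_k) => mUY Q u y) <= R0 + Rc.

(* The lower bound is the data-processing inequality: along a Markov chain
   X - U - Y we have I(X;Y) <= I(X;U), and the (X,Y)-marginal of any point of
   M(D) lies in G(D), so R >= I(X;U) >= I(X;Y) >= I(mu||psi, D).  For
   achievability take U to be a copy of Y under P*: then I(X;U) = I(X;Y) and
   I(Y;U) = H(Y) = I(X;Y) + H(Y|X) <= I(X;Y) + R_c.  As L(D) is upward closed,
   every R >= I(mu||psi, D) is achievable with this same R_c. *)

From HB Require Import structures.
From mathcomp Require Import all_boot.
From Stdlib Require Import Reals Lra FunctionalExtensionality.
Local Open Scope R_scope.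
Set Implicit Arguments.
Unset Strict Implicit.

HB.instance Definition _ :=
  Monoid.isComLaw.Build R 0 Rplus (fun a b c => esym (Rplus_assoc a b c))
    Rplus_comm Rplus_0_l.

Lemma Rinv_ge0 x : 0 <= x -> 0 <= / x.
Proof.
move=> x_ge0; have [-> | x0] := Req_dec x 0; first by rewrite Rinv_0; lra.
by apply: Rlt_le; apply: Rinv_0_lt_compat; lra.
Qed.

(* Also at [p = 0], since [/ 0 = 0]. *)
Lemma Rmult_Rinv_mult p : p * / p * p = p.
Proof. by have [-> | p0] := Req_dec p 0; [ring | field]. Qed.

Lemma ln_div x y : 0 < x -> 0 < y -> ln (x / y) = ln x - ln y.
Proof.
move=> x0 y0; rewrite /Rdiv ln_mult ?ln_Rinv //; exact: Rinv_0_lt_compat.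
Qed.

Section RealSums.
Variable A : finType.
Implicit Types f g : A -> R.

Lemma rsum_ext f g : (forall a, f a = g a) -> rsum f = rsum g.
Proof. by move=> fg; apply: eq_bigr => a _. Qed.

Lemma rsum0 : rsum (fun _ : A => 0) = 0.
Proof. exact: big1. Qed.

Lemma rsumD f g : rsum (fun a => f a + g a) = rsum f + rsum g.
Proof. exact: big_split. Qed.

Lemma rsumB f g : rsum (fun a => f a - g a) = rsum f - rsum g.
Proof.
have := rsumD (fun a => f a - g a) g.
by under rsum_ext => a do rewrite Rplus_comm Rplus_minus; lra.
Qed.

Lemma rsum_mulr f c : rsum (fun a => f a * c) = rsum f * c.
Proof. by rewrite /rsum; elim/big_rec2: _ => [|a y1 y2 _ ->]; lra. Qed.

Lemma rsum_le f g : (forall a, f a <= g a) -> rsum f <= rsum g.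
Proof.
move=> fg; rewrite /rsum; elim/big_rec2: _ => [|a y1 y2 _]; first lra.
by apply: Rplus_le_compat.
Qed.

Lemma rsum_ge0 f : (forall a, 0 <= f a) -> 0 <= rsum f.
Proof. by move=> f_ge0; rewrite -rsum0; apply: rsum_le. Qed.

Lemma rsum_ge_summand f a : (forall a, 0 <= f a) -> f a <= rsum f.
Proof.
move=> f_ge0; rewrite /rsum (bigD1 a) //=.
have : 0 <= \big[Rplus/0]_(b | b != a) f b.
  elim/big_rec: _ => [|b y _ ?]; [lra | have := f_ge0 b; lra].
lra.
Qed.

Lemma rsum_gt0 f a : (forall a, 0 <= f a) -> 0 < f a -> 0 < rsum f.
Proof. by move=> f_ge0 fa0; have := rsum_ge_summand a f_ge0; lra. Qed.

Lemma rsumN f : rsum (fun a => - f a) = - rsum f.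
Proof. by rewrite -[RHS]Rminus_0_l -rsum0 -rsumB; apply: rsum_ext => a; ring. Qed.

Lemma rsum_pred1 (a : A) f : rsum (fun b => if b == a then f b else 0) = f a.
Proof. by rewrite /rsum (bigD1 a) //= eqxx big1 ?Rplus_0_r // => b /negbTE ->. Qed.

Lemma rsum_reindex (B : finType) (e : B -> A) f :
  bijective e -> rsum f = rsum (fun b => f (e b)).
Proof. by move=> e_bij; apply: reindex; apply: onW_bij. Qed.

End RealSums.

Lemma rsum_exch (A B : finType) (F : A -> B -> R) :
  rsum (fun a => rsum (fun b => F a b)) = rsum (fun b => rsum (fun a => F a b)).
Proof. by rewrite /rsum exchange_big. Qed.

Lemma rsum_pair (A B : finType) (F : A -> B -> R) :
  rsum (fun p : A * B => F p.1 p.2) = rsum (fun a => rsum (fun b => F a b)).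
Proof. by rewrite /rsum pair_big. Qed.

Definition rsum3 (A B C : finType) (F : A -> B -> C -> R) : R :=
  rsum (fun a => rsum (fun b => rsum (fun c => F a b c))).

Section TripleSums.
Variables A B C : finType.
Implicit Types F G : A -> B -> C -> R.

Lemma rsum3B F G : rsum3 (fun a b c => F a b c - G a b c) = rsum3 F - rsum3 G.
Proof. by rewrite /rsum3 -rsumB; do 2 (apply: rsum_ext => ?; rewrite -rsumB). Qed.

Lemma rsum3_le F G : (forall a b c, F a b c <= G a b c) -> rsum3 F <= rsum3 G.
Proof. by move=> FG; do 3 apply: rsum_le => ?. Qed.

Lemma rsum3_triple F : rsum (fun t : A * B * C => F t.1.1 t.1.2 t.2) = rsum3 F.
Proof.
rewrite (rsum_pair (fun (p : A * B) c => F p.1 p.2 c)).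
exact: (rsum_pair (fun a b => rsum (fun c => F a b c))).
Qed.

End TripleSums.

Lemma plogq0 q : plogq 0 q = 0.
Proof. by rewrite /plogq; case: Rlt_dec => // ?; lra. Qed.

Lemma plogq_rsum (A : finType) (f : A -> R) s : (forall a, 0 <= f a) ->
  plogq (rsum f) s = rsum (fun a => f a * ln (rsum f / s)).
Proof.
move=> f_ge0; rewrite /plogq; case: Rlt_dec => [f0 | f_le0] /=.
  by rewrite rsum_mulr.
rewrite -(rsum0 A); apply: rsum_ext => a.
suff -> : f a = 0 by ring.
by have := rsum_ge_summand a f_ge0; have := rsum_ge0 f_ge0; have := f_ge0 a; lra.
Qed.

(* Gibbs' inequality for a single term, from [ln z <= z - 1] at [z = s / q]. *)
Lemma plogq_ge_sub q s : 0 <= q -> 0 <= s -> (0 < q -> 0 < s) -> q - s <= plogq q s.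
Proof.
move=> q_ge0 s_ge0 qs; rewrite /plogq; case: Rlt_dec => [q0 | q_le0] /=; last lra.
have s0 := qs q0.
have := exp_ineq1_le (ln (s / q)); rewrite exp_ln; last exact: Rdiv_lt_0_compat.
rewrite !ln_div // => ineq.
have : q * (ln s - ln q) <= q * (s / q - 1) by apply: Rmult_le_compat_l; lra.
have -> : q * (s / q - 1) = s - q by field; lra.
lra.
Qed.

Lemma plogq_mulr p a b : 0 <= p -> (0 < p -> 0 < a /\ 0 < b) ->
  plogq p (a * b) = plogq p a - p * ln b.
Proof.
move=> p_ge0 ab; rewrite /plogq; case: Rlt_dec => [p0 | p_le0] /=; last first.
  by rewrite (_ : p = 0); [ring | lra].
have [a0 b0] := ab p0.
rewrite !ln_div //; last exact: Rmult_lt_0_compat.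
rewrite ln_mult //; ring.
Qed.

Lemma plogq_sqr m : 0 <= m -> plogq m (m * m) = - (m * ln m).
Proof.
move=> m_ge0; rewrite /plogq; case: Rlt_dec => [m0 | m_le0] /=; last first.
  by rewrite (_ : m = 0); [ring | lra].
by rewrite ln_div ?ln_mult //; [ring | exact: Rmult_lt_0_compat].
Qed.

Lemma plogq_markov q a b c m p s :
  0 <= q -> (0 < q -> 0 < a /\ 0 < b /\ 0 < c /\ 0 < m /\ 0 < p /\ 0 < s) ->
  q * m = a * b ->
  q * ln (a / (p * m)) - q * ln (c / (p * s)) = plogq q (b * c / s).
Proof.
move=> q_ge0 pos qm_ab; rewrite /plogq; case: Rlt_dec => [q0 | q_le0] /=; last first.
  by rewrite (_ : q = 0); [ring | lra].
have [a0 [b0 [c0 [m0 [p0 s0]]]]] := pos q0.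
rewrite -Rmult_minus_distr_l -ln_div; try apply: Rdiv_lt_0_compat; try nra.
have -> : q = a * b / m by rewrite -qm_ab; field; lra.
by congr (_ * ln _); field; repeat split; lra.
Qed.

Section DataProcessing.
Variables (T U : finType) (Q : T -> U -> T -> R).
Hypotheses (Q_pmf : is_pmf (fun t : T * U * T => Q t.1.1 t.1.2 t.2))
           (Q_markov : markov Q).

Let Q_ge0 x u y : 0 <= Q x u y := Q_pmf.1 (x, u, y).
Let mXU_ge0 x u : 0 <= mXU Q x u := rsum_ge0 (fun y => Q_ge0 x u y).
Let mUY_ge0 u y : 0 <= mUY Q u y := rsum_ge0 (fun x => Q_ge0 x u y).
Let mXY_ge0 x y : 0 <= mXY Q x y := rsum_ge0 (fun u => Q_ge0 x u y).

Lemma mutinfo_mXU_rsum3 : mutinfo (mXU Q) =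
  rsum3 (fun x u y => Q x u y * ln (mXU Q x u / (marg1 (mXU Q) x * mU Q u))).
Proof.
apply: rsum_ext => x; apply: rsum_ext => u.
by rewrite {1}/mXU plogq_rsum.
Qed.

Lemma mutinfo_mXY_rsum3 : mutinfo (mXY Q) =
  rsum3 (fun x u y => Q x u y * ln (mXY Q x y / (marg1 (mXU Q) x * marg2 (mXY Q) y))).
Proof.
apply: rsum_ext => x; rewrite [RHS]rsum_exch; apply: rsum_ext => y.
have -> : marg1 (mXY Q) x = marg1 (mXU Q) x by apply: rsum_exch.
by rewrite {1}/mXY plogq_rsum.
Qed.

Lemma rsum3_reverse_channel : rsum3 (fun x u y =>
  mUY Q u y * mXY Q x y / marg2 (mXY Q) y) = rsum3 Q.
Proof.
rewrite /rsum3; under rsum_ext => x do rewrite rsum_exch; rewrite rsum_exch.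
under [RHS]rsum_ext => x do rewrite rsum_exch; rewrite [RHS]rsum_exch.
apply: rsum_ext => y.
have sum_UY : rsum (fun u => mUY Q u y) = marg2 (mXY Q) y by apply: rsum_exch.
have split_ratio x u : mUY Q u y * mXY Q x y / marg2 (mXY Q) y =
    mUY Q u y * (mXY Q x y * / marg2 (mXY Q) y) by rewrite /Rdiv; ring.
under rsum_ext => x do under rsum_ext => u do rewrite split_ratio.
under rsum_ext => x do rewrite rsum_mulr sum_UY Rmult_comm.
by rewrite !rsum_mulr -/(marg2 (mXY Q) y) Rmult_Rinv_mult.
Qed.

Lemma marginals_gt0 x u y : 0 < Q x u y ->
  0 < mXU Q x u /\ 0 < mUY Q u y /\ 0 < mXY Q x y /\
  0 < mU Q u /\ 0 < marg1 (mXU Q) x /\ 0 < marg2 (mXY Q) y.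
Proof.
move=> Q0.
have XU0 : 0 < mXU Q x u by apply: (rsum_gt0 (a := y)).
have XY0 : 0 < mXY Q x y by apply: (rsum_gt0 (a := u)).
do ![split] => //.
- by rewrite /mUY; apply: (rsum_gt0 (a := x)).
- by apply: (rsum_gt0 (a := x)) => // x'; apply: mXU_ge0.
- by apply: (rsum_gt0 (a := u)) => // u'; apply: mXU_ge0.
- by apply: (rsum_gt0 (a := x)) => // x'; apply: mXY_ge0.
Qed.

(* By the Markov property the two integrands differ by [plogq Q r] for the
   reverse-channel weight [r], so Gibbs' inequality termwise gives
   [I(X;U) - I(X;Y) >= sum Q - sum r = 0]. *)
Lemma mutinfo_mXY_le_mXU : mutinfo (mXY Q) <= mutinfo (mXU Q).
Proof.
pose r x u y := mUY Q u y * mXY Q x y / marg2 (mXY Q) y.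
have sum_Q : rsum3 Q = 1 by rewrite -rsum3_triple; exact: Q_pmf.2.
suff : rsum3 (fun x u y => Q x u y - r x u y) <= mutinfo (mXU Q) - mutinfo (mXY Q).
  by rewrite rsum3B rsum3_reverse_channel sum_Q; lra.
rewrite mutinfo_mXU_rsum3 mutinfo_mXY_rsum3 -rsum3B; apply: rsum3_le => x u y /=.
rewrite (plogq_markov (b := mUY Q u y)) //; last exact: marginals_gt0.
apply: plogq_ge_sub => //.
  apply: Rmult_le_pos; first by apply: Rmult_le_pos; [apply: mUY_ge0 | apply: mXY_ge0].
  by apply: Rinv_ge0; apply: rsum_ge0.
move=> /marginals_gt0[_ [UY0 [XY0 [_ [_ Y0]]]]].
by apply: Rmult_lt_0_compat; [apply: Rmult_lt_0_compat | apply: Rinv_0_lt_compat].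
Qed.

End DataProcessing.

Definition entropy (A : finType) (p : A -> R) : R := - rsum (fun a => p a * ln (p a)).

Lemma mutinfo_add_condent (A B : finType) (P : A -> B -> R) :
  (forall a b, 0 <= P a b) -> mutinfo P + condent P = entropy (marg2 P).
Proof.
move=> P_ge0; rewrite /condent /entropy -/(Rminus _ _) /mutinfo -rsumB.
transitivity (rsum (fun a => rsum (fun b => - (P a b * ln (marg2 P b))))).
  apply: rsum_ext => a; rewrite -rsumB; apply: rsum_ext => b.
  rewrite plogq_mulr //; first ring.
  by move=> P0; split; [apply: (rsum_gt0 (a := b)) | apply: (rsum_gt0 (a := a))].
rewrite rsum_exch -rsumN; apply: rsum_ext => b.
by rewrite rsumN rsum_mulr.
Qed.

Section CopyChain.
Variables (T U : finType) (e : T -> U) (P : T -> T -> R).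
Hypotheses (e_bij : bijective e) (P_pmf : is_pmf (fun t : T * T => P t.1 t.2)).

Let e_inj : injective e := bij_inj e_bij.

Definition copy_chain (x : T) (u : U) (y : T) : R := if u == e y then P x y else 0.

Lemma copy_mXU x y : mXU copy_chain x (e y) = P x y.
Proof.
rewrite /mXU /copy_chain; under rsum_ext => y' do rewrite (inj_eq e_inj) eq_sym.
exact: rsum_pred1.
Qed.

Lemma copy_mXY : mXY copy_chain = P.
Proof. by do 2 apply: functional_extensionality => ?; apply: rsum_pred1. Qed.

Lemma copy_mUY u y : mUY copy_chain u y = if u == e y then marg2 P y else 0.
Proof. by rewrite /mUY /copy_chain; case: eqP => _ //; apply: rsum0. Qed.

Lemma copy_mU y : mU copy_chain (e y) = marg2 P y.
Proof. by apply: rsum_ext => x; apply: copy_mXU. Qed.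

Lemma copy_markov : markov copy_chain.
Proof.
move=> x u y; have [g _ gK] := e_bij; rewrite -(gK u).
rewrite copy_mU copy_mXU copy_mUY /copy_chain (inj_eq e_inj).
by case: eqP => [-> | _]; ring.
Qed.

Lemma copy_pmf : is_pmf (fun t : T * U * T => copy_chain t.1.1 t.1.2 t.2).
Proof.
split.
  move=> [[x u] y]; rewrite /copy_chain /=.
  by case: eqP => _; [exact: (P_pmf.1 (x, y)) | lra].
rewrite rsum3_triple -P_pmf.2 rsum_pair; apply: rsum_ext => x.
by rewrite (rsum_reindex _ e_bij); apply: rsum_ext => y; apply: copy_mXU.
Qed.

Lemma copy_mutinfo_XU : mutinfo (mXU copy_chain) = mutinfo P.
Proof.
apply: rsum_ext => x; rewrite (rsum_reindex _ e_bij); apply: rsum_ext => y.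
rewrite copy_mXU -[marg2 _ (e y)]/(mU _ _) copy_mU; congr (plogq _ (_ * _)).
by rewrite /marg1 (rsum_reindex _ e_bij); apply: rsum_ext => y'; apply: copy_mXU.
Qed.

Lemma copy_mutinfo_UY : mutinfo (fun y u => mUY copy_chain u y) = entropy (marg2 P).
Proof.
have m1 y : marg1 (fun y u => mUY copy_chain u y) y = marg2 P y.
  by rewrite /marg1; under rsum_ext => u do rewrite copy_mUY; apply: rsum_pred1.
have m2 y : marg2 (fun y u => mUY copy_chain u y) (e y) = marg2 P y.
  rewrite /marg2; under rsum_ext => y' do rewrite copy_mUY (inj_eq e_inj) eq_sym.
  exact: rsum_pred1.
rewrite /entropy -rsumN; apply: rsum_ext => y; rewrite m1 (rsum_reindex _ e_bij).
transitivity (rsum (fun y' =>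
  if y' == y then plogq (marg2 P y) (marg2 P y * marg2 P y) else 0)).
  apply: rsum_ext => y'; rewrite m2 copy_mUY (inj_eq e_inj).
  by case: eqP => [-> | _] //; apply: plogq0.
rewrite rsum_pred1 plogq_sqr //.
by apply: rsum_ge0 => x; exact: (P_pmf.1 (x, y)).
Qed.

End CopyChain.

Section RateRegion.
Variables (T : finType) (rho : T -> T -> R) (mu psi : T -> R) (D : R).

Lemma inL_of_inG P Rc :
  inG rho mu psi D P -> condent P <= Rc -> inL rho mu psi D (mutinfo P) Rc.
Proof.
move=> PG condent_le; have P_pmf := PG.1.
have e_bij := enum_rank_bij T.
exists #|T|, (copy_chain enum_rank P); split; [split; [|split; [|split]] | split].
- by rewrite -addnA leq_addr.
- exact: copy_pmf.
- by rewrite copy_mXY.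
- exact: copy_markov.
- by rewrite copy_mutinfo_XU //; apply: Rle_refl.
- rewrite copy_mutinfo_UY // -mutinfo_add_condent; first lra.
  by move=> x y; apply: (P_pmf.1 (x, y)).
Qed.

Lemma inL_mutinfo_ge (Pstar : T -> T -> R) R0 Rc :
  (forall P, inG rho mu psi D P -> mutinfo Pstar <= mutinfo P) ->
  inL rho mu psi D R0 Rc -> mutinfo Pstar <= R0.
Proof.
move=> Pstar_min [k [Q [[_ [Q_pmf [QG Q_markov]]] [XU_le _]]]].
have := Pstar_min _ QG; have := mutinfo_mXY_le_mXU Q_pmf Q_markov; lra.
Qed.

Lemma inL_mono R0 Rc R0' Rc' :
  R0 <= R0' -> R0 + Rc <= R0' + Rc' ->
  inL rho mu psi D R0 Rc -> inL rho mu psi D R0' Rc'.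
Proof.
move=> le_R0 le_sum [k [Q [QM [XU_le UY_le]]]].
by exists k, Q; split => //; split; lra.
Qed.

End RateRegion.

Unset Implicit Arguments.

Theorem mainTheorem8 (T : finType) (rho : T -> T -> R) (mu psi : T -> R) (D : R)
  (Pstar : T -> T -> R) :
  (forall x y, 0 <= rho x y) ->
  is_pmf mu -> is_pmf psi ->
  0 <= D ->
  inG rho mu psi D Pstar ->
  (forall P, inG rho mu psi D P -> mutinfo Pstar <= mutinfo P) ->
  forall Rc, condent Pstar <= Rc ->
    (inL rho mu psi D (mutinfo Pstar) Rc /\
     (forall R0, inL rho mu psi D R0 Rc -> mutinfo Pstar <= R0)) /\
    (forall R0, inL rho mu psi D R0 Rc <-> mutinfo Pstar <= R0) /\
    (forall R0, (exists Rc', inL rho mu psi D R0 Rc') <-> mutinfo Pstar <= R0).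
Proof.
move=> _ _ _ _ Pstar_G Pstar_min Rc condent_le.
have Pstar_L := inL_of_inG Pstar_G condent_le.
have lower R0 Rc' : inL rho mu psi D R0 Rc' -> mutinfo Pstar <= R0.
  exact: inL_mutinfo_ge.
have upper R0 : mutinfo Pstar <= R0 -> inL rho mu psi D R0 Rc.
  by move=> le_R0; apply: inL_mono Pstar_L => //; lra.
split; [by split => // R0; apply: lower | split => R0; split].
- exact: lower.
- exact: upper.
- by case=> Rc'; apply: lower.
- by move=> /upper; exists Rc.
Qed.
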